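(* Let $\mathfrak{M}$ be a model, $x$ a variable, $\bar z=z_1,\dots,z_m$ a list of variables distinct from $x$, and $\psi,\theta$ formulas such that no variable of $\bar z$ occurs free in $\theta$. If $\psi$ is non-dependent of $x$ in $\mathfrak{M}$ provided $\theta$, then $$[\![\forall x\exists\bar z(\theta\to\psi)]\!]^{\mathfrak{M}}=[\![\exists x\theta\to\exists\bar z\,\forall x(\theta\to\psi)]\!]^{\mathfrak{M}},$$ and consequently, if moreover $\mathfrak{M}\models\exists x\theta$, then $[\![\forall x\exists\bar z(\theta\to\psi)]\!]^{\mathfrak{M}}=[\![\exists\bar z\,\forall x(\theta\to\psi)]\!]^{\mathfrak{M}}$.
   Context: Work in first-order logic with equality over a relational signature, with countably many variables $v_1,v_2,\dots$. A model $\mathfrak{M}$ has nonempty universe $M$; assignments are $\bar a\in M^\omega$ ($a_i$ is the value of $v_i$); for $x=v_i$, $b\in M$, $\bar a^x_b$ is $\bar a$ with $i$-th entry replaced by $b$. $[\![\varphi]\!]^{\mathfrak{M}}=\{\bar a\in M^\omega:\mathfrak{M}\models\varphi[\bar a]\}$; $\mathfrak{M}\models\chi$ means every $\bar a$ satisfies $\chi$; $\exists\bar z$ abbreviates $\exists z_1\dots\exists z_m$. Definition: $\psi$ is non-dependent of $x$ in $\mathfrak{M}$ provided $\theta$ iff for all $\bar a\in M^\omega$, $b\in M$: if $\mathfrak{M}\models\theta[\bar a]$ and $\mathfrak{M}\models\theta[\bar a^x_b]$ then ($\mathfrak{M}\models\psi[\bar a]\iff\mathfrak{M}\models\psi[\bar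 a^x_b]$). *)

(* a deep embedding of first-order logic with equality
   over a relational signature, with variables v_1, v_2, ... represented
   by natural numbers. *)
From Stdlib Require Import List Arith Fin.
Import ListNotations.

Record signature := {
  rel_sym : Type;
  arity : rel_sym -> nat
}.

Section Syntax.
Variable S : signature.

(* Atomic formulas in a relational signature have only variables as
   arguments. *)
Inductive form : Type :=
| FEq : nat -> nat -> form
| FRel : forall r : rel_sym S, (Fin.t (arity S r) -> nat) -> form
| FBot : form
| FNeg : form -> form
| FAnd : form -> form -> form
| FOr : form -> form -> form
| FImp : form -> form -> form
| FAll : nat -> form -> form
| FEx : nat -> form -> form.

Fixpoint free (x : nat) (phi : form) : Prop :=
  match phi with
  | FEq u v => u = x \/ v = x
  | FRel r vs => exists i, vs i = x
  | FBot => False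
  | FNeg p => free x p
  | FAnd p q | FOr p q | FImp p q => free x p \/ free x q
  | FAll y p | FEx y p => y <> x /\ free x p
  end.

Definition exs (zs : list nat) (phi : form) : form :=
  fold_right FEx phi zs.
End Syntax.

Arguments FEq {S}. Arguments FRel {S}. Arguments FBot {S}. Arguments FNeg {S}.
Arguments FAnd {S}. Arguments FOr {S}. Arguments FImp {S}.
Arguments FAll {S}. Arguments FEx {S}. Arguments free {S}. Arguments exs {S}.

Record model (S : signature) := {
  univ : Type;
  univ_nonempty : inhabited univ;
  interp : forall r : rel_sym S, (Fin.t (arity S r) -> univ) -> Prop
}.
Arguments univ {S}. Arguments interp {S}.

Definition assignment {S} (M : model S) := nat -> univ M.

Definition upd {S} {M : model S} (a : assignment M) (x : nat) (b : univ M)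
  : assignment M := fun j => if Nat.eqb j x then b else a j.

Fixpoint sat {S} (M : model S) (phi : form S) (a : assignment M) : Prop :=
  match phi with
  | FEq u v => a u = a v
  | FRel r vs => interp M r (fun i => a (vs i))
  | FBot => False
  | FNeg p => ~ sat M p a
  | FAnd p q => sat M p a /\ sat M q a
  | FOr p q => sat M p a \/ sat M q a
  | FImp p q => sat M p a -> sat M q a
  | FAll y p => forall b, sat M p (upd a y b)
  | FEx y p => exists b, sat M p (upd a y b)
  end.

Definition denot {S} (M : model S) (phi : form S) : assignment M -> Prop :=
  fun a => sat M phi a.

Definition same_denot {S} (M : model S) (phi psi : form S) : Prop :=
  forall a, denot M phi a <-> denot M psi a.

Definition valid {S} (M : model S) (chi : form S) : Prop :=
  forall a, sat M chi a.

Definition nondep {S} (M : model S) (psi : form S) (x : nat) (theta : form S)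
  : Prop :=
  forall (a : assignment M) (b : univ M),
    sat M theta a -> sat M theta (upd a x b) ->
    (sat M psi a <-> sat M psi (upd a x b)).

(* Given a witness b0 for [exists x theta], choose the [zs]-values that make
   [theta -> psi] true at x = b0.  Since [theta] does not mention [zs], it still
   holds at b0 after this choice, so [psi] holds there; non-dependence then
   transports [psi] to every other value of x satisfying [theta].  The converse
   inclusion is pure logic. *)
From Stdlib Require Import List Arith FunctionalExtensionality Classical_Prop.

Lemma sat_ext_free {S} (M : model S) (phi : form S) (a a' : assignment M) :
  (forall j, free j phi -> a j = a' j) -> (sat M phi a <-> sat M phi a').
Proof.
  revert a a'.
  induction phi; intros a a' H; simpl in *.
  8, 9: enough (Hb : forall b, sat M phi (upd a n b) <-> sat M phi (upd a' n b))
          by firstorder;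
        intros b; apply IHphi; intros j Hj; unfold upd;
        destruct (Nat.eqb_spec j n); [reflexivity | apply H; split; auto].
  - rewrite (H n), (H n0) by auto; tauto.
  - replace (fun i => a (n i)) with (fun i => a' (n i)); [tauto|].
    apply functional_extensionality; intro i; symmetry; apply H; eauto.
  - tauto.
  - rewrite (IHphi a a'); auto; tauto.
  - rewrite (IHphi1 a a'), (IHphi2 a a'); auto; tauto.
  - rewrite (IHphi1 a a'), (IHphi2 a a'); auto; tauto.
  - rewrite (IHphi1 a a'), (IHphi2 a a'); auto; tauto.
Qed.

Lemma upd_upd {S} {M : model S} (a : assignment M) x b b' :
  upd (upd a x b) x b' = upd a x b'.
Proof.
  apply functional_extensionality; intro j; unfold upd.
  destruct (Nat.eqb_spec j x); auto.
Qed.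

Lemma sat_exs {S} (M : model S) (phi : form S) (zs : list nat) (a : assignment M) :
  sat M (exs zs phi) a <->
  exists c : assignment M, (forall j, ~ In j zs -> c j = a j) /\ sat M phi c.
Proof.
  revert a; induction zs as [|z zs IH]; intro a; simpl.
  - split.
    + intro H; exists a; auto.
    + intros [c [Hc Hs]].
      replace a with c; auto. apply functional_extensionality; auto.
  - split.
    + intros [b Hb]. apply IH in Hb. destruct Hb as [c [Hc Hs]].
      exists c; split; auto. intros j Hj.
      rewrite Hc by tauto. unfold upd.
      destruct (Nat.eqb_spec j z); [exfalso; auto | reflexivity].
    + intros [c [Hc Hs]]. exists (c z). apply IH. exists c; split; auto.
      intros j Hj. unfold upd.
      destruct (Nat.eqb_spec j z); subst; auto.
      apply Hc. intros [H|H]; auto.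
Qed.

Lemma sat_all_exs_of_exs_all {S} (M : model S) x zs (psi theta : form S) a :
  (sat M (FEx x theta) a -> sat M (exs zs (FAll x (FImp theta psi))) a) ->
  sat M (FAll x (exs zs (FImp theta psi))) a.
Proof.
  intros H b. apply sat_exs.
  destruct (classic (sat M theta (upd a x b))) as [T|T].
  - destruct (proj1 (sat_exs _ _ _ _) (H (ex_intro _ b T))) as [c [Hc Hs]].
    exists (upd c x b). split.
    + intros j Hj. unfold upd. destruct (Nat.eqb_spec j x); auto.
    + exact (Hs b).
  - exists (upd a x b). split; [reflexivity|]. simpl. tauto.
Qed.

Lemma sat_exs_all_of_all_exs {S} (M : model S) x zs (psi theta : form S) a :
  (forall z, In z zs -> ~ free z theta) ->
  nondep M psi x theta ->
  sat M (FAll x (exs zs (FImp theta psi))) a ->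
  sat M (FEx x theta) a -> sat M (exs zs (FAll x (FImp theta psi))) a.
Proof.
  intros zs_fresh psi_nondep H [b0 T0].
  destruct (proj1 (sat_exs _ _ _ _) (H b0)) as [c [Hc Hs]]. simpl in Hs.
  assert (Tc : sat M theta c).
  { apply (sat_ext_free M theta c (upd a x b0)); auto.
    intros j Hj. apply Hc. intro Hin. exact (zs_fresh j Hin Hj). }
  apply sat_exs. exists (upd c x (a x)). split.
  - intros j Hj. unfold upd. destruct (Nat.eqb_spec j x); subst; auto.
    rewrite Hc by auto. unfold upd. destruct (Nat.eqb_spec j x); congruence.
  - intros b. simpl. rewrite upd_upd. intro Tb.
    apply (psi_nondep c b Tc Tb). auto.
Qed.

(* [~ In x zs] is deliberately unused: the argument never needs x outside the zs. *)
Theorem mainTheorem9 (S : signature) (M : model S) (x : nat) (zs : list nat)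
  (psi theta : form S) :
  ~ In x zs ->
  (forall z, In z zs -> ~ free z theta) ->
  nondep M psi x theta ->
  same_denot M (FAll x (exs zs (FImp theta psi)))
               (FImp (FEx x theta) (exs zs (FAll x (FImp theta psi))))
  /\ (valid M (FEx x theta) ->
      same_denot M (FAll x (exs zs (FImp theta psi)))
                   (exs zs (FAll x (FImp theta psi)))).
Proof.
  intros _ zs_fresh psi_nondep.
  assert (pulled : same_denot M (FAll x (exs zs (FImp theta psi)))
                     (FImp (FEx x theta) (exs zs (FAll x (FImp theta psi))))).
  { intro a; split.
    - exact (sat_exs_all_of_all_exs M x zs psi theta a zs_fresh psi_nondep).
    - apply sat_all_exs_of_exs_all. }
  split; [exact pulled|].
  intros ex_theta a. rewrite (pulled a).
  unfold denot; simpl. split; [intro H; apply H, ex_theta | auto].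
Qed.
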